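(* Let $m_1,\ldots,m_n\ge 2$ be integers, let $\mathcal{B}\subseteq\{0,1\}^n$, and let $G=\mathrm{NEPS}(K_{m_1},\ldots,K_{m_n};\mathcal{B})$, where $K_m$ is the complete graph on $m$ vertices. Then for all vertices $v,w\in V(G)$ and every integer $r\ge0$, $$w_{G}(r,v,w)=\sum_{(\beta_1,\ldots,\beta_{r})\in \mathcal{B}^{r}}\ \prod_{t=1}^{n} a_{t},$$ where $\beta_\ell=(\beta_{\ell1},\ldots,\beta_{\ell n})$, $\ell_t:=\beta_{1t}+\cdots+\beta_{rt}$, and $$a_{t}=\begin{cases}\frac{m_t-1}{m_t}\big((m_{t}-1)^{\ell_t-1}-(-1)^{\ell_t-1}\big) & \text{if } \pi_{t}(v)=\pi_t(w),\\[1mm] \frac{1}{m_t}\big((m_{t}-1)^{\ell_t}-(-1)^{\ell_t}\big) & \text{if } \pi_{t}(v)\neq\pi_t(w),\end{cases}$$ with $\pi_t$ the projection onto the $t$-th coordinate.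
   Context: Given $\mathcal{B}\subseteq\{0,1\}^n$ and graphs $G_1,\ldots,G_n$, $\mathrm{NEPS}(G_1,\ldots,G_n;\mathcal{B})$ is the graph with vertex set $V(G_1)\times\cdots\times V(G_n)$, in which $(x_1,\ldots,x_n)$ and $(y_1,\ldots,y_n)$ are adjacent iff there is $(\alpha_1,\ldots,\alpha_n)\in\mathcal{B}$ such that $x_i=y_i$ whenever $\alpha_i=0$, and $x_i,y_i$ are distinct and adjacent in $G_i$ whenever $\alpha_i=1$. $w_G(r,v,w)$ is the number of walks of length $r$ from $v$ to $w$ in $G$ (with $w_G(0,v,w)=1$ if $v=w$, $0$ otherwise). *)

From HB Require Import structures.
From mathcomp Require Import all_boot all_order all_algebra.
Set Implicit Arguments. Unset Strict Implicit. Unset Printing Implicit Defensive.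
Import Order.TTheory GRing.Theory Num.Theory.

(* NEPS(G_1,...,G_n; B): vertex set is the dependent product of the T i;
   B is a set of 0/1 vectors indexed by 'I_n (true = 1). *)
Definition neps_adj (n : nat) (T : 'I_n -> finType) (e : forall i, rel (T i))
  (B : {set {ffun 'I_n -> bool}}) : rel {dffun forall i : 'I_n, T i} :=
  fun x y => [exists alpha in B,
    [forall i, if alpha i then (x i != y i) && e i (x i) (y i)
               else x i == y i]].

Definition complete_rel (m : nat) : rel 'I_m := fun x y => x != y.

Definition walk_count (V : finType) (e : rel V) (r : nat) (v w : V) : nat :=
  #|[set p : {ffun 'I_r.+1 -> V} |
      [&& p ord0 == v, p ord_max == w &
          [forall j : 'I_r, e (p (widen_ord (leqnSn r) j)) (p (lift ord0 j))]]]|.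

From mathcomp Require Import all_boot all_order all_algebra.
From mathcomp Require Import ring.
Set Implicit Arguments. Unset Strict Implicit. Unset Printing Implicit Defensive.
Import Order.TTheory GRing.Theory Num.Theory.

(* A step of NEPS(G_1, ..., G_n; B) from x to y chooses a pattern alpha in B
   and, independently in each coordinate t, either a step of G_t (alpha_t = 1)
   or no move (alpha_t = 0); the pattern is forced by x and y.  So a walk of
   length r is a sequence beta in B^r together with, for each t, a walk of
   length l_t = beta_1t + ... + beta_rt in G_t, and
   w_G(r, v, w) = sum_beta prod_t w_(G_t)(l_t, v_t, w_t).
   Since K_M is (M-1)-regular, w(k+1, a, c) + w(k, a, c) = (M-1)^k, which
   solves to w(k, a, c) = ((M-1)^k + c (-1)^k) / M with c = M-1 if a = c and
   c = -1 otherwise. *)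

Section FfunRcons.
Variables (X : Type) (r : nat).

Definition ffun_rcons (g : {ffun 'I_r -> X}) (x : X) : {ffun 'I_r.+1 -> X} :=
  [ffun i => if unlift ord_max i is Some j then g j else x].

Lemma ffun_rcons_lift g x j : ffun_rcons g x (lift ord_max j) = g j.
Proof. by rewrite ffunE liftK. Qed.

Lemma ffun_rcons_max g x : ffun_rcons g x ord_max = x.
Proof. by rewrite ffunE unlift_none. Qed.

End FfunRcons.

Lemma big_ffun_rcons (R : Type) (idx : R) (op : Monoid.com_law idx)
    (X : finType) r (F : {ffun 'I_r.+1 -> X} -> R) :
  \big[op/idx]_(f : {ffun 'I_r.+1 -> X}) F f =
  \big[op/idx]_(g : {ffun 'I_r -> X}) \big[op/idx]_(x : X) F (ffun_rcons g x).
Proof.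
rewrite pair_big /= (reindex (fun p => ffun_rcons p.1 p.2)) //.
apply: onW_bij; exists (fun f : {ffun 'I_r.+1 -> X} => ([ffun j => f (lift ord_max j)], f ord_max)).
  move=> [g x] /=; rewrite ffun_rcons_max; congr pair.
  by apply/ffunP => j; rewrite ffunE ffun_rcons_lift.
by move=> f; apply/ffunP => i; rewrite ffunE; case: unliftP => [j ->|->]; rewrite ?ffunE.
Qed.

Lemma big_ffun_ord0 (R : Type) (idx : R) (op : Monoid.law idx) (X : finType)
    (F : {ffun 'I_0 -> X} -> R) :
  \big[op/idx]_(f : {ffun 'I_0 -> X}) F f = F (ffun0 (card_ord 0)).
Proof. by rewrite (big_pred1 (ffun0 (card_ord 0))) // => f; apply/esym/eqP/ffunP => -[]. Qed.

Lemma forall_ord_recr r (P : pred 'I_r.+1) :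
  [forall i, P i] = [forall j : 'I_r, P (lift ord_max j)] && P ord_max.
Proof.
apply/forallP/andP => [P_all|[/forallP P_lift P_max] i]; first by split=> //; apply/forallP.
by case: (unliftP ord_max i) => [j ->|->].
Qed.

Lemma big_ffun_rcons_in (R : Type) (idx : R) (op : Monoid.com_law idx)
    (X : finType) (A : {pred X}) r (F : {ffun 'I_r.+1 -> X} -> R) :
  \big[op/idx]_(f : {ffun 'I_r.+1 -> X} | [forall i, f i \in A]) F f =
  \big[op/idx]_(g : {ffun 'I_r -> X} | [forall i, g i \in A])
    \big[op/idx]_(x in A) F (ffun_rcons g x).
Proof.
rewrite big_mkcond big_ffun_rcons [RHS]big_mkcond; apply: eq_bigr => g _.
have rcons_in x : [forall i, ffun_rcons g x i \in A] = [forall i, g i \in A] && (x \in A).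
  rewrite forall_ord_recr ffun_rcons_max; congr andb.
  by apply: eq_forallb => i; rewrite ffun_rcons_lift.
under eq_bigr do rewrite rcons_in.
by case: [forall i, g i \in A] => /=; [rewrite [RHS]big_mkcond | rewrite big1].
Qed.

Lemma bigA_distr_dffun (R : Type) (zero one : R) (times : Monoid.mul_law zero)
    (plus : Monoid.add_law zero times) (I : finType) (T : I -> finType)
    (F : forall i, T i -> R) :
  \big[times/one]_i \big[plus/zero]_(x : T i) F i x =
  \big[plus/zero]_(u : {dffun forall i, T i}) \big[times/one]_i F i (u i).
Proof.
rewrite (reindex (@dffun_of_fprod _ T)); last exact/onW_bij/dffun_of_fprod_bij.
transitivity (\big[plus/zero]_(t : fprod T) \big[times/one]_(i in I) [ffun x => F i x] (t i));
  last by apply: eq_bigr => t _; apply: eq_bigr => i _; rewrite !ffunE.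
rewrite big_fprod.
under eq_bigr => i _ do rewrite (big_tag (fun i x => F i x)).
rewrite bigA_distr_big_dep; apply: eq_bigr => g _; apply: eq_bigr => i _.
by rewrite /untag; case: eqP => // e; rewrite ffunE.
Qed.

Lemma widen_ord_leqnSn n (i : 'I_n) : widen_ord (leqnSn n) i = lift ord_max i.
Proof. by apply/val_inj; rewrite /= /bump leqNgt ltn_ord. Qed.

Lemma prod_nat_of_bool (I : finType) (b : pred I) : \prod_i (b i : nat) = [forall i, b i].
Proof.
have mul_and x y : nat_of_bool (x && y) = (x * y)%N by rewrite mulnb.
by rewrite -(big_morph nat_of_bool mul_and (erefl : nat_of_bool true = 1%N)) big_andE.
Qed.

Section Walks.
Variables (V : finType) (e : rel V).

Definition is_walk r (p : {ffun 'I_r.+1 -> V}) :=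
  [forall j : 'I_r, e (p (widen_ord (leqnSn r) j)) (p (lift ord0 j))].

Lemma walk_countE r v w :
  walk_count e r v w =
  \sum_(p : {ffun 'I_r.+1 -> V}) [&& p ord0 == v, p ord_max == w & is_walk p].
Proof. by rewrite /walk_count -sum1dep_card big_mkcond; apply: eq_bigr => p _; case: ifP. Qed.

Lemma is_walk_rcons r (p : {ffun 'I_r.+1 -> V}) x :
  is_walk (ffun_rcons p x) = is_walk p && e (p ord_max) x.
Proof.
have lift0_lift_max (j : 'I_r) :
    lift ord0 (lift ord_max j) = lift ord_max (lift ord0 j) :> 'I_r.+2.
  by apply/val_inj; rewrite /= /bump leq0n ltnS (leqNgt r) ltn_ord.
have lift0_max : lift ord0 ord_max = ord_max :> 'I_r.+2 by apply/val_inj.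
rewrite /is_walk forall_ord_recr lift0_max !widen_ord_leqnSn ffun_rcons_max ffun_rcons_lift.
congr andb; apply: eq_forallb => j.
by rewrite lift0_lift_max !widen_ord_leqnSn !ffun_rcons_lift.
Qed.

Lemma walk_count0 v w : walk_count e 0 v w = (v == w).
Proof.
have ord0_max : ord0 = ord_max :> 'I_1 by apply/val_inj.
have walk0 (p : {ffun 'I_1 -> V}) : is_walk p by apply/forallP => -[].
rewrite walk_countE (bigD1 [ffun=> v]) //= big1 => [|p p_v].
  by rewrite -ord0_max !ffunE eqxx walk0 andbT addn0.
case: eqP => // p0_v; case/eqP: p_v; apply/ffunP => i.
by rewrite ffunE (ord1 i).
Qed.

Lemma walk_countS r v w :
  walk_count e r.+1 v w = \sum_u walk_count e r v u * e u w.
Proof.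
have ord0_lift : ord0 = lift ord_max ord0 :> 'I_r.+2 by apply/val_inj.
rewrite walk_countE big_ffun_rcons.
under [RHS]eq_bigr do rewrite walk_countE big_distrl.
rewrite [RHS]exchange_big; apply: eq_bigr => p _ /=.
under eq_bigr do rewrite is_walk_rcons ord0_lift ffun_rcons_lift ffun_rcons_max.
rewrite (bigD1 w) //= big1 => [|x /negbTE->]; last by rewrite andbF.
rewrite (bigD1 (p ord_max)) //= big1 => [|u /negbTE u_p]; last by rewrite [_ == u]eq_sym u_p andbF.
by rewrite !eqxx !addn0 /= mulnb andbA.
Qed.

Lemma sum_walk_count_regular d :
  (forall x, \sum_y e x y = d) -> forall r v, \sum_w walk_count e r v w = d ^ r.
Proof.
move=> deg_d; elim=> [|r IH] v.
  under eq_bigr do rewrite walk_count0.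
  by rewrite (bigD1 v) //= eqxx big1 // => w /negbTE; rewrite eq_sym => ->.
under eq_bigr do rewrite walk_countS.
rewrite exchange_big /=; under eq_bigr do rewrite -big_distrr /= deg_d.
by rewrite -big_distrl /= IH expnSr.
Qed.

Definition step_if (b : bool) (x y : V) : bool := if b then e x y else x == y.

Lemma walk_count_step_if k (b : bool) v w :
  \sum_u walk_count e k v u * step_if b u w = walk_count e (k + b) v w.
Proof.
case: b; first by rewrite addn1 walk_countS.
rewrite addn0 (bigD1 w) //= eqxx muln1 big1 ?addn0 // => u /negbTE u_w.
by rewrite /step_if u_w muln0.
Qed.

End Walks.

Section Neps.
Variables (n : nat) (T : 'I_n -> finType) (e : forall i, rel (T i)).
Variable B : {set {ffun 'I_n -> bool}}.
Arguments e : clear implicits.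
Hypothesis e_irr : forall i, irreflexive (e i).

Lemma neps_adjE (x y : {dffun forall i, T i}) :
  (neps_adj e B x y : nat) = \sum_(alpha in B) \prod_i step_if (e i) (alpha i) (x i) (y i).
Proof.
pose fits (alpha : {ffun 'I_n -> bool}) :=
  [forall i, if alpha i then (x i != y i) && e i (x i) (y i) else x i == y i].
have fitsE (alpha : {ffun 'I_n -> bool}) :
    \prod_i step_if (e i) (alpha i) (x i) (y i) = fits alpha.
  rewrite -prod_nat_of_bool; apply: eq_bigr => i _; rewrite /step_if.
  by case: (alpha i) => //; case: eqP => [->|]; rewrite ?e_irr.
have fits_pattern alpha : fits alpha -> alpha = [ffun i => x i != y i].
  move=> /forallP fits_a; apply/ffunP => i; rewrite ffunE.
  by move: (fits_a i); case: (alpha i) => [/andP[->]|/eqP->]; rewrite ?eqxx.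
under eq_bigr do rewrite fitsE.
rewrite /neps_adj; case: existsP => [[alpha /andP[alphaB fits_a]] | no_fit].
  have {}fits_a : fits alpha := fits_a.
  rewrite (bigD1 alpha) //= fits_a big1 // => beta /andP[_ beta_alpha].
  apply/eqP; rewrite eqb0; apply: contra beta_alpha => /fits_pattern->.
  by rewrite (fits_pattern _ fits_a).
rewrite big1 // => alpha alphaB; apply/eqP; rewrite eqb0; apply/negP => fits_a.
by apply: no_fit; exists alpha; rewrite alphaB.
Qed.

Lemma walk_count_neps r v w :
  walk_count (neps_adj e B) r v w =
  \sum_(beta : {ffun 'I_r -> {ffun 'I_n -> bool}} | [forall l, beta l \in B])
    \prod_i walk_count (e i) (\sum_(l < r) beta l i) (v i) (w i).
Proof.
elim: r w => [|r IH] w.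
  rewrite walk_count0 big_mkcond big_ffun_ord0 /=.
  rewrite ifT; last by apply/forallP => -[].
  under eq_bigr do rewrite big_ord0 walk_count0.
  by rewrite prod_nat_of_bool; congr (nat_of_bool _); apply/eqP/eqfunP => [->|/ffunP].
have step_coordinatewise (beta : {ffun 'I_r -> {ffun 'I_n -> bool}})
    (alpha : {ffun 'I_n -> bool}) :
    \sum_(u : {dffun forall i, T i}) \prod_i (walk_count (e i) (\sum_(l < r) beta l i) (v i) (u i)
                                            * step_if (e i) (alpha i) (u i) (w i)) =
    \prod_i walk_count (e i) (\sum_(l < r) beta l i + alpha i) (v i) (w i).
  rewrite -(bigA_distr_dffun _ _ (fun i x =>
    walk_count (e i) (\sum_(l < r) beta l i) (v i) x * step_if (e i) (alpha i) x (w i))).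
  by apply: eq_bigr => i _; rewrite walk_count_step_if.
rewrite walk_countS.
under eq_bigr do rewrite IH neps_adjE big_distrl /=.
under eq_bigr do under eq_bigr do rewrite big_distrr /=.
rewrite exchange_big; under eq_bigr do rewrite exchange_big /=.
under eq_bigr do under eq_bigr do under eq_bigr do rewrite -big_split /=.
under eq_bigr do under eq_bigr do rewrite step_coordinatewise.
rewrite big_ffun_rcons_in; apply: eq_bigr => beta _; apply: eq_bigr => alpha _.
apply: eq_bigr => i _; rewrite big_ord_recr /= ffun_rcons_max.
congr (walk_count _ (_ + _) _ _); apply: eq_bigr => l _.
by rewrite widen_ord_leqnSn ffun_rcons_lift.
Qed.

End Neps.

Section CompleteGraph.
Variable M : nat.

Lemma walk_count_completeS k (a c : 'I_M) :
  walk_count (@complete_rel M) k.+1 a c + walk_count (@complete_rel M) k a c = M.-1 ^ k.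
Proof.
have degree (x : 'I_M) : \sum_y complete_rel x y = M.-1.
  rewrite (bigD1 x) //= /complete_rel eqxx add0n (eq_bigr (fun=> 1%N)) => [|y]; last first.
    by rewrite eq_sym => ->.
  by rewrite sum1_card cardC1 card_ord.
rewrite -(sum_walk_count_regular degree k a) walk_countS [in RHS](bigD1 c) //= addnC.
rewrite (bigD1 c) //= /complete_rel eqxx muln0 add0n; congr addn.
by apply: eq_bigr => u; rewrite /complete_rel => ->; rewrite muln1.
Qed.

Local Open Scope ring_scope.

Lemma walk_count_complete (R : numFieldType) k (a c : 'I_M) : (0 < M)%N ->
  (walk_count (@complete_rel M) k a c)%:R =
  ((M%:R - 1) ^+ k + (if a == c then M%:R - 1 else -1) * (-1) ^+ k) / M%:R :> R.
Proof.
move=> M_gt0; have M_neq0 : M%:R != 0 :> R by rewrite pnatr_eq0 -lt0n.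
elim: k c => [|k IH] c.
  rewrite walk_count0 expr0 mulr1; case: eqP => _ /=; last by rewrite subrr mul0r.
  by rewrite addrC subrK divff.
have step : (walk_count (@complete_rel M) k.+1 a c)%:R =
    (M%:R - 1) ^+ k - (walk_count (@complete_rel M) k a c)%:R :> R.
  have -> : M%:R - 1 = M.-1%:R :> R by rewrite -subn1 natrB.
  by rewrite -natrX -(walk_count_completeS k a c) natrD addrK.
by rewrite step IH !exprS; case: (a == c); field.
Qed.

Lemma walk_count_complete_intexp (R : numFieldType) k (a c : 'I_M) : (1 < M)%N ->
  (walk_count (@complete_rel M) k a c)%:R =
  (let M' : R := M%:R in let l : int := k%:Z in
   if a == c then (M' - 1) / M' * ((M' - 1) ^ (l - 1) - (-1) ^ (l - 1))
   else 1 / M' * ((M' - 1) ^ l - (-1) ^ l)).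
Proof.
move=> M_gt1; have M_neq0 : M%:R != 0 :> R by rewrite pnatr_eq0 gtn_eqF // ltnW.
have M1_neq0 : M%:R - 1 != 0 :> R by rewrite subr_eq0 pnatr_eq1 gtn_eqF.
rewrite walk_count_complete /=; last exact: ltnW.
case: (a == c); last by rewrite -!exprnP; field.
(* At k = 0 the exponent l - 1 is -1: this is where M > 1 is needed. *)
case: k => [|k]; first by rewrite sub0r !exprN1 invrN1 !expr0; field; rewrite M_neq0 M1_neq0.
by rewrite -addn1 PoszD addrK -!exprnP addn1 !exprS; field.
Qed.

End CompleteGraph.

Local Open Scope ring_scope.

Theorem corollary3p2 (n : nat) (m : 'I_n -> nat) (hm : forall t, (1 < m t)%N)
  (B : {set {ffun 'I_n -> bool}})
  (v w : {dffun forall t : 'I_n, 'I_(m t)}) (r : nat) :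
  ((walk_count (neps_adj (fun t => @complete_rel (m t)) B) r v w)%:R : rat) =
  \sum_(beta : {ffun 'I_r -> {ffun 'I_n -> bool}} | [forall l, beta l \in B])
    \prod_(t < n)
      (let M : rat := (m t)%:R in
       let lt : int := (\sum_(l < r) (beta l t : nat))%N%:Z in
       if v t == w t then
         (M - 1) / M * ((M - 1) ^ (lt - 1) - (-1) ^ (lt - 1))
       else
         1 / M * ((M - 1) ^ lt - (-1) ^ lt)).
Proof.
rewrite walk_count_neps => [|t x]; last by rewrite /complete_rel eqxx.
rewrite natr_sum; apply: eq_bigr => beta _; rewrite natr_prod; apply: eq_bigr => t _.
exact: walk_count_complete_intexp.
Qed.
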